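(* Let $F$ be a field of characteristic $p\ge2$, let $l,m,n\ge2$ be integers with $p\mid n=lm$, and set $T=D_{n,l}\cap D_{n,m}\cap D_n^+$. (1) If $p\nmid l$, then for every monic original $f\in T$ there exist monic original $g^*,h^*\in F[x]$ of degrees $l$ and $m$, respectively, with $f=g^*\circ h^*$, $(g^* )'(h^* )'\ne0$, and $0\le\deg (h^* )'<m-l$. (2) If $p\mid l$, then for every monic original $f\in T$ there exist monic original $g,h\in F[x]$ of degrees $m$ and $l$, respectively, with $f=g\circ h$ and $\deg g'\le m-(m+1)/l$.
   Context: $g\circ h=g(h)$; monic means leading coefficient 1; original means value 0 at 0; $'$ is the formal derivative. A polynomial is decomposable if it equals $g\circ h$ with $\deg g,\deg h\ge2$; $D_n$ is the set of decomposable polynomials of degree $n$ in $F[x]$ and $D_n^+=D_n\setminus F[x^p]$. For a divisor $e$ of $n$, $D_{n,e}=\{g\circ h:\ \deg g=e,\ h\text{ monic},\ h(0)=0,\ \deg h=n/e\}$. *)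

From HB Require Import structures.
From mathcomp Require Import all_boot all_order all_algebra.
Set Implicit Arguments. Unset Strict Implicit. Unset Printing Implicit Defensive.
Import GRing.Theory.
Local Open Scope ring_scope.

(* Conventions: g \o h is  g \Po h  (= g(h(x))) ; deg p = (size p).-1,
   so "deg p = d" with p <> 0 is  size p = d.+1. *)

Definition monic_orig (F : fieldType) (f : {poly F}) : Prop :=
  f \is monic /\ f.[0] = 0.

Definition Dn (F : fieldType) (n : nat) (f : {poly F}) : Prop :=
  size f = n.+1 /\
  exists g h : {poly F}, (2 <= (size g).-1)%N /\ (2 <= (size h).-1)%N /\ f = g \Po h.

Definition in_Fxp (F : fieldType) (p : nat) (f : {poly F}) : Prop :=
  forall i : nat, ~~ (p %| i)%N -> f`_i = 0.

Definition Dn_plus (F : fieldType) (p n : nat) (f : {poly F}) : Prop :=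
  Dn n f /\ ~ in_Fxp p f.

Definition Dne (F : fieldType) (n e : nat) (f : {poly F}) : Prop :=
  exists g h : {poly F},
    size g = e.+1 /\ h \is monic /\ h.[0] = 0 /\ size h = (n %/ e).+1 /\ f = g \Po h.

Definition Tset (F : fieldType) (p n l m : nat) (f : {poly F}) : Prop :=
  Dne n l f /\ Dne n m f /\ Dn_plus p n f.

From HB Require Import structures.
From mathcomp Require Import all_boot all_order all_algebra.
From mathcomp Require Import zify.
Import GRing.Theory Num.Theory.
Set Implicit Arguments. Unset Strict Implicit.
Local Open Scope ring_scope.

(* As f is not in F[x^p], f' <> 0, and the chain rule gives
   deg f' = deg g' * deg h + deg h' for every decomposition f = g \o h.  When p divides
   d = deg g, the coefficient of x^(d-1) in g' vanishes, so deg g' <= d - 2 and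
   deg f' < d * deg h - deg h.  Apply this to the decomposition whose outer degree is
   divisible by p (m in case (1), l in case (2)) and compare with the other one: in
   case (1) the outer factor of degree l has deg g' = l - 1 exactly, which leaves
   deg h' < m - l; in case (2) it yields l * deg g' + m < l * m. *)

Section DerivativeDegrees.

Variables (F : fieldType) (p : nat).
Hypothesis pcharFp : p \in [pchar F].

Lemma deriv_neq0_notin_Fxp (f : {poly F}) : ~ in_Fxp p f -> f^`() != 0.
Proof.
move=> notFxp; apply/negP => /eqP f'0; apply: notFxp => -[|i]; first by rewrite dvdn0.
move=> /negbTE p_ndvd; have /eqP := congr1 (fun q : {poly F} => q`_i) f'0.
by rewrite coef_deriv coef0 -mulr_natr mulf_eq0 -(dvdn_pcharf pcharFp) p_ndvd orbF => /eqP.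
Qed.

Lemma size_deriv_pchar_dvd (q : {poly F}) (k : nat) :
  (size q <= k.+1)%N -> (p %| k)%N -> (size q^`() <= k.-1)%N.
Proof.
move=> size_q p_dvd_k; apply/leq_sizeP => j j_ge; rewrite coef_deriv.
have [->|j_neq] := eqVneq j.+1 k.
  by apply/eqP; rewrite -mulr_natr mulf_eq0 -(dvdn_pcharf pcharFp) p_dvd_k orbT.
rewrite nth_default ?mul0rn //; apply: leq_trans size_q _; move/eqP: j_neq; lia.
Qed.

Lemma size_deriv_monic_pchar (q : {poly F}) (k : nat) :
  q \is monic -> size q = k.+1 -> ~~ (p %| k)%N -> size q^`() = k.
Proof.
move=> q_monic size_q p_ndvd_k; apply/eqP; rewrite eqn_leq.
have q_neq0 : q != 0 by rewrite -size_poly_eq0 size_q.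
rewrite -ltnS -size_q lt_size_deriv //=.
case: k size_q p_ndvd_k => [|k] size_q; first by rewrite dvdn0.
move=> /negbTE p_ndvd; rewrite ltnNge; apply/negP => /leq_sizeP/(_ k (leqnn k))/eqP.
rewrite coef_deriv -mulr_natr mulf_eq0 -(dvdn_pcharf pcharFp) p_ndvd orbF.
by have := monicP q_monic; rewrite lead_coefE size_q => ->; rewrite oner_eq0.
Qed.

Lemma size_deriv_comp (g h : {poly F}) :
  (g \Po h)^`() != 0 ->
  (size (g \Po h)^`()).-1 = ((size g^`()).-1 * (size h).-1 + (size h^`()).-1)%N.
Proof.
rewrite deriv_comp => f'_neq0.
have [g'h_neq0 h'_neq0] : g^`() \Po h != 0 /\ h^`() != 0.
  by apply/andP; rewrite -negb_or -mulf_eq0.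
have := size_comp_poly g^`() h; rewrite size_mul //.
move: g'h_neq0 h'_neq0; rewrite -!size_poly_gt0.
move: ((size g^`()).-1 * _)%N (size (_ \Po _)) (size h^`()) => d a b; lia.
Qed.

Lemma deriv_comp_neq0 (g h : {poly F}) :
  (g \Po h)^`() != 0 -> g^`() != 0 /\ h^`() != 0.
Proof.
rewrite deriv_comp mulf_eq0 negb_or => /andP[g'h_neq0 ->]; split=> //.
by apply: contraNneq g'h_neq0 => ->; rewrite comp_poly0.
Qed.

Lemma size_deriv_comp_pchar_dvd (g h : {poly F}) (d e : nat) :
  size g = d.+1 -> size h = e.+1 -> (p %| d)%N -> (g \Po h)^`() != 0 ->
  ((size (g \Po h)^`()).-1 + e < d * e)%N.
Proof.
move=> size_g size_h p_dvd_d f'_neq0; rewrite size_deriv_comp // size_h /=.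
have [g'_neq0 h'_neq0] := deriv_comp_neq0 f'_neq0.
have size_g' := size_deriv_pchar_dvd (eq_leq size_g) p_dvd_d.
have size_h' : (size h^`() < e.+1)%N.
  by rewrite -size_h lt_size_deriv // -size_poly_gt0 size_h.
have deg_g'_e : ((size g^`()).-1.+2 * e <= d * e)%N.
  by rewrite leq_mul2r; move: g'_neq0; rewrite -size_poly_gt0; lia.
move: g'_neq0 h'_neq0 size_h' deg_g'_e; rewrite -!size_poly_gt0 !mulSn.
move: ((size g^`()).-1 * e)%N (d * e)%N (size h^`()) => a de s; lia.
Qed.

Lemma size_deriv_inner_lt (g h g2 h2 : {poly F}) (l m : nat) :
  g \is monic -> size g = l.+1 -> ~~ (p %| l)%N -> size h = m.+1 ->
  size g2 = m.+1 -> (p %| m)%N -> size h2 = l.+1 ->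
  g \Po h = g2 \Po h2 -> (g \Po h)^`() != 0 ->
  ((size h^`()).-1 < m - l)%N.
Proof.
move=> g_monic size_g p_ndvd_l size_h size_g2 p_dvd_m size_h2 f_eq f'_neq0.
have := size_deriv_comp_pchar_dvd size_g2 size_h2 p_dvd_m.
rewrite -f_eq size_deriv_comp // (size_deriv_monic_pchar g_monic size_g p_ndvd_l).
rewrite size_h /= (mulnC m l) => /(_ f'_neq0).
have l_gt0 : (0 < l)%N by move: p_ndvd_l; apply: contraNT; rewrite -eqn0Ngt => /eqP ->.
have ->: (l.-1 * m = l * m - m)%N by rewrite -subn1 mulnBl mul1n.
move: (l * m)%N (leq_pmull m l_gt0) => lm; lia.
Qed.

Lemma size_deriv_outer_lt (g h g2 h2 : {poly F}) (l m : nat) :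
  size h = l.+1 -> size g2 = l.+1 -> (p %| l)%N -> size h2 = m.+1 ->
  g \Po h = g2 \Po h2 -> (g \Po h)^`() != 0 ->
  ((size g^`()).-1 * l + m < l * m)%N.
Proof.
move=> size_h size_g2 p_dvd_l size_h2 f_eq f'_neq0.
have := size_deriv_comp_pchar_dvd size_g2 size_h2 p_dvd_l.
rewrite -f_eq size_deriv_comp // size_h => /(_ f'_neq0) /=; lia.
Qed.

End DerivativeDegrees.

Lemma monic_orig_comp_outer (F : fieldType) (g h : {poly F}) :
  monic_orig (g \Po h) -> h \is monic -> h.[0] = 0 -> (1 < size h)%N ->
  monic_orig g.
Proof.
move=> [/monicP f_monic f0] h_monic h0 size_h; split.
  by apply/monicP; rewrite -f_monic lead_coef_comp // (monicP h_monic) expr1n mulr1.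
by move: f0; rewrite horner_comp h0.
Qed.

Lemma ler_sub_div_of_muln_lt (R : numFieldType) (x l m : nat) :
  (x * l + m < l * m)%N -> x%:R <= m%:R - m.+1%:R / l%:R :> R.
Proof.
move=> lt_xlm; have l_gt0 : (0 < l)%N.
  by apply: contraTT lt_xlm; rewrite -eqn0Ngt => /eqP ->; rewrite !muln0 mul0n ltn0.
have l_pos : (0 : R) < l%:R by rewrite ltr0n.
rewrite lerBrDr -(ler_pM2r l_pos) mulrDl divfK ?pnatr_eq0 -?lt0n //.
by rewrite -!natrM -natrD ler_nat addnS (mulnC m l).
Qed.

Theorem theorem4p18 (F : fieldType) (p l m n : nat) :
  p \in [pchar F] -> (2 <= p)%N ->
  (2 <= l)%N -> (2 <= m)%N -> (2 <= n)%N -> n = (l * m)%N -> (p %| n)%N ->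
  (* (1) *)
  ((~~ (p %| l)%N) ->
    forall f : {poly F}, monic_orig f -> Tset p n l m f ->
      exists gs hs : {poly F},
        monic_orig gs /\ monic_orig hs /\
        size gs = l.+1 /\ size hs = m.+1 /\
        f = gs \Po hs /\
        gs^`() * hs^`() != 0 /\
        ((size hs^`()).-1 < m - l)%N) /\
  (* (2) *)
  ((p %| l)%N ->
    forall f : {poly F}, monic_orig f -> Tset p n l m f ->
      exists g h : {poly F},
        monic_orig g /\ monic_orig h /\
        size g = m.+1 /\ size h = l.+1 /\
        f = g \Po h /\
        (g^`() != 0 ->
          ((size g^`()).-1)%:R <= (m%:R - (m.+1)%:R / l%:R : rat))).
Proof.
move=> pcharFp _ l_ge2 m_ge2 _ n_eq p_dvd_n.
have n_div_l : (n %/ l)%N = m by rewrite n_eq mulKn // ltnW.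
have n_div_m : (n %/ m)%N = l by rewrite n_eq mulnK // ltnW.
split=> [p_ndvd_l | p_dvd_l] f f_mo
  [[g1 [h1 [size_g1 [h1_monic [h1_0 [size_h1 f_eq1]]]]]]
   [[g2 [h2 [size_g2 [h2_monic [h2_0 [size_h2 f_eq2]]]]]] [_ f_notFxp]]];
  rewrite ?n_div_l ?n_div_m in size_h1 size_h2;
  have f'_neq0 := deriv_neq0_notin_Fxp pcharFp f_notFxp;
  have f_eq12 : g1 \Po h1 = g2 \Po h2 by rewrite -f_eq1 -f_eq2.
- have p_dvd_m : (p %| m)%N.
    by move: p_dvd_n; rewrite n_eq Euclid_dvdM ?(pcharf_prime pcharFp) // (negbTE p_ndvd_l).
  rewrite f_eq1 in f_mo f'_neq0.
  have size_h1_gt1 : (1 < size h1)%N by rewrite size_h1 ltnS ltnW.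
  have g1_mo := monic_orig_comp_outer f_mo h1_monic h1_0 size_h1_gt1.
  have [g1'_neq0 h1'_neq0] := deriv_comp_neq0 f'_neq0.
  exists g1, h1; do 6?split => //; first exact: mulf_neq0.
  exact: (size_deriv_inner_lt pcharFp (proj1 g1_mo) size_g1 p_ndvd_l size_h1
           size_g2 p_dvd_m size_h2 f_eq12 f'_neq0).
- rewrite f_eq2 in f_mo f'_neq0.
  have size_h2_gt1 : (1 < size h2)%N by rewrite size_h2 ltnS ltnW.
  have g2_mo := monic_orig_comp_outer f_mo h2_monic h2_0 size_h2_gt1.
  exists g2, h2; do 5?split => //; move=> _.
  apply: ler_sub_div_of_muln_lt.
  exact: (size_deriv_outer_lt pcharFp size_h2 size_g1 p_dvd_l size_h1
           (esym f_eq12) f'_neq0).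
Qed.
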